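(* Let $\mathscr{H}$ be a complex Hilbert space and $A\in\mathbb{B}(\mathscr{H})$. Then for every $\mu\in[0,2]$, $$w^2(A)\leq\frac{1}{4}\left\|\mu|A|^2+(2-\mu)|A^*|^2\right\|+\frac{1}{8}\left\||A|^2+|A^*|^2\right\|+\frac{1}{4}\,w(A^2).$$
   Context: $\mathbb{B}(\mathscr{H})$ denotes the algebra of bounded linear operators on $\mathscr{H}$; $\|\cdot\|$ is the operator norm. For $T\in\mathbb{B}(\mathscr{H})$, $|T|=(T^*T)^{1/2}$, and $w(T)=\sup\{|\langle Tx,x\rangle|: \|x\|=1\}$ is the numerical radius. *)

(* A complex Hilbert space is an lmodType over C with an
   inner product (linear in the first argument) that is complete for the induced norm. *)
From HB Require Import structures.
From mathcomp Require Import all_boot all_order all_algebra.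
From mathcomp Require Import complex.
From mathcomp Require Import boolp classical_sets reals.
Set Implicit Arguments. Unset Strict Implicit. Unset Printing Implicit Defensive.
Import Order.TTheory GRing.Theory Num.Theory.
Local Open Scope ring_scope.
Local Open Scope complex_scope.

Section Hilbert.
Variable R : realType.
Local Notation C := (complex R).
Variable H : lmodType C.
Variable ip : H -> H -> C.

Definition is_inner_product : Prop :=
  [/\ forall (a : C) (x y z : H), ip (a *: x + y) z = a * ip x z + ip y z,
      forall x y : H, ip y x = (ip x y)^*,
      forall x : H, 0 <= ip x x
    & forall x : H, ip x x = 0 -> x = 0].

Definition hnorm (x : H) : R := Num.sqrt (complex.Re (ip x x)).

Definition cabs (z : C) : R := Num.sqrt (complex.Re z ^+ 2 + complex.Im z ^+ 2).

Definition hcauchy (u : nat -> H) : Prop :=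
  forall e : R, 0 < e -> exists N : nat, forall m n : nat,
    (N <= m)%N -> (N <= n)%N -> hnorm (u m - u n) < e.

Definition hconverges (u : nat -> H) : Prop :=
  exists l : H, forall e : R, 0 < e -> exists N : nat, forall n : nat,
    (N <= n)%N -> hnorm (u n - l) < e.

Definition hcomplete : Prop := forall u : nat -> H, hcauchy u -> hconverges u.

Definition is_hilbert_space : Prop := is_inner_product /\ hcomplete.

Definition bounded_op (T : H -> H) : Prop :=
  exists M : R, forall x : H, hnorm (T x) <= M * hnorm x.

Definition is_adjoint (T T' : H -> H) : Prop :=
  forall x y : H, ip (T x) y = ip x (T' y).

Definition opnorm (T : H -> H) : R :=
  sup [set r : R | exists x : H, hnorm x = 1 /\ r = hnorm (T x)].

Definition numrad (T : H -> H) : R :=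
  sup [set r : R | exists x : H, hnorm x = 1 /\ r = cabs (ip (T x) x)].

End Hilbert.

From HB Require Import structures.
From mathcomp Require Import all_boot all_order all_algebra.
From mathcomp Require Import complex.
From mathcomp Require Import boolp classical_sets reals.
From mathcomp Require Import lra ring.
Set Implicit Arguments. Unset Strict Implicit. Unset Printing Implicit Defensive.
Import Order.TTheory GRing.Theory Num.Theory.
Local Open Scope ring_scope.
Local Open Scope complex_scope.

(* Fix a unit vector x and put a = <A x, x>.  Cauchy--Schwarz gives
   |a|^2 <= ||A x||^2 and |a|^2 = |<x, A* x>|^2 <= ||A* x||^2.  Applied to
   y = conj(a) A x + a A* x it also gives the mixed estimate
     4 |a|^2 <= ||A x||^2 + ||A* x||^2 + 2 |<A^2 x, x>|,
   since <y, x> = 2|a|^2 and ||y||^2 = |a|^2 (||A x||^2 + ||A* x||^2)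
   + 2 Re (conj(a)^2 <A^2 x, x>).  Averaging yields the pointwise bound, where
   ||A x||^2 and ||A* x||^2 are the quadratic forms of A*A and AA*, which are
   dominated by the operator norms; taking the supremum over x concludes. *)

Section ComplexModulus.
Variable R : realType.
Implicit Types (z w : R[i]) (k : R).

Lemma cabs_normc z : cabs z = ComplexField.Normc.normc z.
Proof. by case: z. Qed.

Lemma cabs_ge0 z : 0 <= cabs z.
Proof. exact: sqrtr_ge0. Qed.

Lemma cabs0 : cabs (0 : R[i]) = 0.
Proof. by rewrite cabs_normc ComplexField.Normc.normc0. Qed.

Lemma cabs_sq z : cabs z ^+ 2 = complex.Re z ^+ 2 + complex.Im z ^+ 2.
Proof. by rewrite sqr_sqrtr // addr_ge0 // sqr_ge0. Qed.

Lemma cabsM z w : cabs (z * w) = cabs z * cabs w.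
Proof. by rewrite !cabs_normc ComplexField.Normc.normcM. Qed.

Lemma conjcc z : conjc (conjc z) = z.
Proof. by case: z => a b /=; rewrite opprK. Qed.

Lemma conjcM z w : conjc (z * w) = conjc z * conjc w.
Proof. by case: z => a b; case: w => c d /=; congr (_ +i* _); ring. Qed.

Lemma cabsJ z : cabs (conjc z) = cabs z.
Proof. by case: z => a b; rewrite /cabs /= sqrrN. Qed.

Lemma mulcJ z : z * conjc z = (cabs z ^+ 2)%:C.
Proof. rewrite cabs_sq; case: z => a b /=; congr (_ +i* _); ring. Qed.

Lemma ReR k : complex.Re k%:C = k.
Proof. by []. Qed.

Lemma ReD z w : complex.Re (z + w) = complex.Re z + complex.Re w.
Proof. by case: z; case: w. Qed.

Lemma Re_scale k z : complex.Re (k%:C * z) = k * complex.Re z.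
Proof. by case: z => a b /=; ring. Qed.

Lemma Re_addJ z : complex.Re (z + conjc z) = 2 * complex.Re z.
Proof. by case: z => a b /=; ring. Qed.

Lemma ReJ z : complex.Re (conjc z) = complex.Re z.
Proof. by case: z. Qed.

Lemma Re_le_cabs z : complex.Re z <= cabs z.
Proof.
apply: le_trans (ler_norm _) _.
by rewrite -sqrtr_sqr ler_sqrt ?lerDl ?addr_ge0 ?sqr_ge0.
Qed.

End ComplexModulus.

Section InnerProduct.
Variables (R : realType) (H : lmodType R[i]) (ip : H -> H -> R[i]).
Hypothesis hip : is_inner_product ip.
Local Notation nrm := (hnorm ip).
Implicit Types (x y z u v : H) (a : R[i]).

Lemma ipDl x y z : ip (x + y) z = ip x z + ip y z.
Proof. by case: hip => lin _ _ _; rewrite -[x]scale1r lin mul1r scale1r. Qed.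

Lemma ip0l z : ip 0 z = 0.
Proof. by apply: (@addrI _ (ip 0 z)); rewrite -ipDl !addr0. Qed.

Lemma ipZl a x z : ip (a *: x) z = a * ip x z.
Proof. by case: hip => lin _ _ _; rewrite -[a *: x]addr0 lin ip0l addr0. Qed.

Lemma ipJ x y : ip y x = conjc (ip x y).
Proof. by case: hip. Qed.

Lemma ipDr x y z : ip z (x + y) = ip z x + ip z y.
Proof. by rewrite !(ipJ _ z) ipDl rmorphD. Qed.

Lemma ipZr a x z : ip z (a *: x) = conjc a * ip z x.
Proof. by rewrite !(ipJ _ z) ipZl rmorphM. Qed.

Lemma ipNl x z : ip (- x) z = - ip x z.
Proof. by rewrite -scaleN1r ipZl mulN1r. Qed.

Lemma ipNr x z : ip z (- x) = - ip z x.
Proof. by rewrite !(ipJ _ z) ipNl rmorphN. Qed.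

Lemma ip0r z : ip z 0 = 0.
Proof. by rewrite ipJ ip0l conjc0. Qed.

Lemma hnorm_ge0 x : 0 <= nrm x.
Proof. exact: sqrtr_ge0. Qed.

Lemma ip_self x : ip x x = (nrm x ^+ 2)%:C.
Proof.
case: hip => _ _ pos _; have := pos x; rewrite /hnorm.
case: (ip x x) => a b; rewrite lecE /= => /andP[/eqP -> a_ge0].
by rewrite sqr_sqrtr.
Qed.

Lemma hnorm_eq0 x : nrm x = 0 -> x = 0.
Proof.
case: hip => _ _ _ definite nx0; apply: definite.
by rewrite ip_self nx0 expr0n.
Qed.

(* Cauchy--Schwarz, squared: expand ||r y - c x||^2 >= 0 with r = ||x||^2
   and c = <y, x>. *)
Lemma cauchy_schwarz_sq x y : cabs (ip y x) ^+ 2 <= nrm y ^+ 2 * nrm x ^+ 2.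
Proof.
have [->|x_neq0] := eqVneq x 0.
  by rewrite ip0r cabs0 expr0n /= mulr_ge0 ?sqr_ge0.
set r := nrm x ^+ 2; set c := ip y x.
have r_gt0 : 0 < r.
  rewrite exprn_gt0 // lt_def hnorm_ge0 andbT.
  by apply: contra x_neq0 => /eqP /hnorm_eq0 ->.
have expand : ip (r%:C *: y - c *: x) (r%:C *: y - c *: x)
    = (r * (r * nrm y ^+ 2 - cabs c ^+ 2))%:C.
  have rJ : conjc r%:C = r%:C by rewrite /= oppr0.
  rewrite ipDl ipNl !ipZl !ipDr !ipNr !ipZr rJ (ipJ y x) -/c !ip_self -/r.
  transitivity (r%:C * (r%:C * (nrm y ^+ 2)%:C - c * conjc c)); first by ring.
  by rewrite mulcJ /=; congr (_ +i* _); ring.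
have : 0 <= r * (r * nrm y ^+ 2 - cabs c ^+ 2).
  have := ip_self (r%:C *: y - c *: x); rewrite expand => /complexI ->.
  exact: sqr_ge0.
by rewrite pmulr_rge0 // subr_ge0 mulrC.
Qed.

Lemma cauchy_schwarz x y : cabs (ip y x) <= nrm y * nrm x.
Proof.
rewrite -ler_sqr ?nnegrE ?cabs_ge0 ?mulr_ge0 ?hnorm_ge0 //.
by rewrite exprMn cauchy_schwarz_sq.
Qed.

Lemma Re_ip_le x y : complex.Re (ip y x) <= nrm y * nrm x.
Proof. exact: le_trans (Re_le_cabs _) (cauchy_schwarz x y). Qed.

Lemma hnorm_triangle u v : nrm (u + v) <= nrm u + nrm v.
Proof.
rewrite -ler_sqr ?nnegrE ?addr_ge0 ?hnorm_ge0 //.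
have := ip_self (u + v); rewrite ipDl !ipDr (ipJ u v) !ip_self.
move=> /(congr1 (@complex.Re R)); rewrite !ReD /= ReJ => <-.
have := Re_ip_le v u; nra.
Qed.

Lemma ip_lincomb_self a b u v :
  ip (a *: u + b *: v) (a *: u + b *: v)
    = a * conjc a * ip u u + a * conjc b * ip u v
      + b * conjc a * ip v u + b * conjc b * ip v v.
Proof. rewrite ipDl !ipDr !ipZl !ipZr; ring. Qed.

Lemma hnorm_scale a u : nrm (a *: u) = cabs a * nrm u.
Proof.
apply/eqP; rewrite -(eqrXn2 (_ : 0 < 2)%N) ?mulr_ge0 ?cabs_ge0 ?hnorm_ge0 //.
apply/eqP/complexI; rewrite -ip_self ipZl ipZr mulrA mulcJ ip_self.
by rewrite exprMn /=; congr (_ +i* _); ring.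
Qed.

End InnerProduct.

Section Suprema.
Variable R : realType.
Implicit Types (E : set R) (B r : R).

(* A set of nonnegative reals has a nonnegative supremum (0 if it has none). *)
Lemma sup_ge0 E : (forall r, E r -> 0 <= r) -> 0 <= sup E.
Proof.
move=> E_ge0; have [[[r Er] ubE]|no_sup] := pselect (has_sup E).
  by apply: le_trans (E_ge0 r Er) _; apply: ub_le_sup.
by rewrite sup_out.
Qed.

Lemma le_sup_bounded E B r : (forall s, E s -> s <= B) -> E r -> r <= sup E.
Proof. by move=> leB Er; apply: ub_le_sup => //; exists B. Qed.

End Suprema.

Section BoundedOperators.
Variables (R : realType) (H : lmodType R[i]) (ip : H -> H -> R[i]).
Hypothesis hip : is_inner_product ip.
Local Notation nrm := (hnorm ip).
Implicit Types (S T U : H -> H) (x : H).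

Lemma bounded_op_nonneg T :
  bounded_op ip T -> exists2 K, 0 <= K & forall x, nrm (T x) <= K * nrm x.
Proof.
case=> M leM; exists `|M|; first exact: normr_ge0.
by move=> x; apply: le_trans (leM x) _; rewrite ler_wpM2r ?hnorm_ge0 ?ler_norm.
Qed.

(* ||U y||^2 = <T U y, y> <= K ||U y|| ||y||, so U is bounded by K. *)
Lemma adjoint_bounded T U : bounded_op ip T -> is_adjoint ip T U -> bounded_op ip U.
Proof.
move=> /bounded_op_nonneg [K K_ge0 leK] adj; exists K => y.
have sq_le : nrm (U y) * nrm (U y) <= nrm (U y) * (K * nrm y).
  rewrite -expr2 -[nrm (U y) ^+ 2]ReR -ip_self // -adj mulrCA.
  apply: le_trans (Re_ip_le hip _ _) _.
  by rewrite mulrA ler_wpM2r ?hnorm_ge0.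
have [Uy0|Uy_neq0] := eqVneq (nrm (U y)) 0.
  by rewrite Uy0 mulr_ge0 ?hnorm_ge0.
by move: sq_le; rewrite ler_pM2l // lt_def Uy_neq0 hnorm_ge0.
Qed.

Lemma bounded_comp S T : bounded_op ip S -> bounded_op ip T -> bounded_op ip (S \o T).
Proof.
move=> /bounded_op_nonneg [K K_ge0 leK] /bounded_op_nonneg [L _ leL].
exists (K * L) => x; apply: le_trans (leK _) _.
by rewrite -mulrA ler_wpM2l.
Qed.

Lemma bounded_add S T :
  bounded_op ip S -> bounded_op ip T -> bounded_op ip (fun x => S x + T x).
Proof.
move=> [K leK] [L leL]; exists (K + L) => x.
by apply: le_trans (hnorm_triangle hip _ _) _; rewrite mulrDl lerD.
Qed.

Lemma bounded_scale a T : bounded_op ip T -> bounded_op ip (fun x => a *: T x).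
Proof.
move=> [K leK]; exists (cabs a * K) => x.
by rewrite hnorm_scale // -mulrA ler_wpM2l ?cabs_ge0.
Qed.

Lemma opnorm_ge0 T : 0 <= opnorm ip T.
Proof. by apply: sup_ge0 => _ [x [_ ->]]; exact: hnorm_ge0. Qed.

Lemma numrad_ge0 T : 0 <= numrad ip T.
Proof. by apply: sup_ge0 => _ [x [_ ->]]; exact: cabs_ge0. Qed.

Lemma opnorm_ub T x : bounded_op ip T -> nrm x = 1 -> nrm (T x) <= opnorm ip T.
Proof.
move=> [K leK] x1; apply: (@le_sup_bounded _ _ K); last by exists x.
by move=> _ [y [y1 ->]]; rewrite -[K]mulr1 -y1.
Qed.

Lemma Re_ip_le_opnorm T x :
  bounded_op ip T -> nrm x = 1 -> complex.Re (ip (T x) x) <= opnorm ip T.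
Proof.
move=> bT x1; apply: le_trans (Re_ip_le hip _ _) _.
by rewrite x1 mulr1 opnorm_ub.
Qed.

Lemma numrad_ub T x : bounded_op ip T -> nrm x = 1 -> cabs (ip (T x) x) <= numrad ip T.
Proof.
move=> /bounded_op_nonneg [K _ leK] x1.
apply: (@le_sup_bounded _ _ K); last by exists x.
move=> _ [y [y1 ->]]; apply: le_trans (cauchy_schwarz hip _ _) _.
by rewrite y1 mulr1 -[K]mulr1 -y1 leK.
Qed.

Lemma numrad_sq_le T B : 0 <= B ->
  (forall x, nrm x = 1 -> cabs (ip (T x) x) ^+ 2 <= B) -> numrad ip T ^+ 2 <= B.
Proof.
move=> B_ge0 leB; rewrite -(sqr_sqrtr B_ge0) ler_sqr ?nnegrE ?sqrtr_ge0 ?numrad_ge0 //.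
have [[x0 x01]|no_unit] := pselect (exists x, nrm x = 1).
  apply: ge_sup; first by exists (cabs (ip (T x0) x0)), x0.
  move=> _ [x [x1 ->]].
  by rewrite -ler_sqr ?nnegrE ?cabs_ge0 ?sqrtr_ge0 // (sqr_sqrtr B_ge0) leB.
rewrite /numrad sup_out ?sqrtr_ge0 // => -[[_ [x [x1 _]]] _].
by apply: no_unit; exists x.
Qed.

End BoundedOperators.

Section AdjointPair.
Variables (R : realType) (H : lmodType R[i]) (ip : H -> H -> R[i]).
Hypothesis hip : is_inner_product ip.
Variables A Astar : H -> H.
Hypothesis hadj : is_adjoint ip A Astar.
Local Notation nrm := (hnorm ip).
Implicit Types x : H.

Lemma Re_ip_adjA x : complex.Re (ip (Astar (A x)) x) = nrm (A x) ^+ 2.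
Proof. by rewrite ipJ // -hadj ip_self // ReJ. Qed.

Lemma Re_ip_Aadj x : complex.Re (ip (A (Astar x)) x) = nrm (Astar x) ^+ 2.
Proof. by rewrite hadj ip_self. Qed.

Lemma Re_ip_sum x :
  complex.Re (ip (Astar (A x) + A (Astar x)) x) = nrm (A x) ^+ 2 + nrm (Astar x) ^+ 2.
Proof. by rewrite ipDl // ReD Re_ip_adjA Re_ip_Aadj. Qed.

Lemma Re_ip_weighted_sum (c d : R) x :
  complex.Re (ip (c%:C *: Astar (A x) + d%:C *: A (Astar x)) x)
    = c * nrm (A x) ^+ 2 + d * nrm (Astar x) ^+ 2.
Proof.
by rewrite ipDl // (ipZl hip c%:C) (ipZl hip d%:C) ReD !Re_scale Re_ip_adjA Re_ip_Aadj.
Qed.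

Lemma cabs_ip_le_A x : nrm x = 1 -> cabs (ip (A x) x) ^+ 2 <= nrm (A x) ^+ 2.
Proof. by move=> x1; have := cauchy_schwarz_sq hip x (A x); rewrite x1 expr1n mulr1. Qed.

Lemma cabs_ip_le_adj x : nrm x = 1 -> cabs (ip (A x) x) ^+ 2 <= nrm (Astar x) ^+ 2.
Proof.
move=> x1; have := cauchy_schwarz_sq hip x (Astar x).
by rewrite x1 expr1n mulr1 ipJ // -hadj cabsJ.
Qed.

(* The key estimate: with a = <A x, x> and y = conj(a) A x + a A* x we have
   <y, x> = 2|a|^2 and ||y||^2 = |a|^2 (||A x||^2 + ||A* x||^2)
   + 2 Re(conj(a)^2 <A^2 x, x>); Cauchy--Schwarz <y, x> <= ||y|| gives
   4|a|^2 <= ||A x||^2 + ||A* x||^2 + 2 |<A^2 x, x>|. *)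
Lemma mixed_bound x : nrm x = 1 ->
  4 * cabs (ip (A x) x) ^+ 2
    <= nrm (A x) ^+ 2 + nrm (Astar x) ^+ 2 + 2 * cabs (ip (A (A x)) x).
Proof.
move=> x1; set a := ip (A x) x; set b := ip (A (A x)) x.
pose t := cabs a ^+ 2; pose P := nrm (A x) ^+ 2; pose Q := nrm (Astar x) ^+ 2.
have adj_a : ip (Astar x) x = conjc a by rewrite ipJ // -hadj.
pose y := (conjc a *: A x) + (a *: Astar x).
have y_x : complex.Re (ip y x) = 2 * t.
  rewrite /y ipDl // (ipZl hip (conjc a)) (ipZl hip a) adj_a -/a.
  by rewrite [conjc a * a]mulrC mulcJ ReD /= -/t; ring.
pose w := conjc a * conjc a * b.
have y_y : nrm y ^+ 2 = t * (P + Q) + 2 * complex.Re w.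
  have := ip_self hip y; rewrite /y ip_lincomb_self // conjcc.
  rewrite (ipJ hip (A x) (Astar x)) -(hadj (A x) x) -/b.
  rewrite (ip_self hip (A x)) (ip_self hip (Astar x)) -/P -/Q.
  move=> /(congr1 (@complex.Re R)) /= <-.
  transitivity (complex.Re ((a * conjc a) * (P%:C + Q%:C) + (w + conjc w))).
    by congr complex.Re; rewrite /w !conjcM !conjcc; ring.
  by rewrite ReD Re_addJ mulcJ -/t /=; ring.
have w_le : complex.Re w <= t * cabs b.
  by apply: le_trans (Re_le_cabs _) _; rewrite !cabsM !cabsJ /t expr2.
have t_ge0 : 0 <= t by exact: sqr_ge0.
have two_t_le : 2 * t <= nrm y by have := Re_ip_le hip x y; rewrite y_x x1 mulr1.
have sq_le : t * (4 * t) <= t * (P + Q + 2 * cabs b).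
  have : (2 * t) ^+ 2 <= nrm y ^+ 2.
    by rewrite ler_sqr ?nnegrE ?hnorm_ge0 // mulr_ge0.
  rewrite y_y; nra.
change (4 * t <= P + Q + 2 * cabs b).
have [t0|t_neq0] := eqVneq t 0.
  have P_ge0 : 0 <= P := sqr_ge0 _; have Q_ge0 : 0 <= Q := sqr_ge0 _.
  by rewrite t0 mulr0 !addr_ge0 // mulr_ge0 ?cabs_ge0.
by move: sq_le; rewrite ler_pM2l // lt_def t_neq0.
Qed.

(* Pointwise form of the theorem: average the mixed bound with the
   convex combination mu |a|^2 + (2 - mu) |a|^2 of the two single bounds. *)
Lemma pointwise_bound (mu : R) x : 0 <= mu -> mu <= 2 -> nrm x = 1 ->
  cabs (ip (A x) x) ^+ 2
    <= 4^-1 * (mu * nrm (A x) ^+ 2 + (2 - mu) * nrm (Astar x) ^+ 2)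
     + 8^-1 * (nrm (A x) ^+ 2 + nrm (Astar x) ^+ 2)
     + 4^-1 * cabs (ip (A (A x)) x).
Proof.
move=> mu_ge0 mu_le2 x1; have := mixed_bound x1.
have := ler_wpM2l mu_ge0 (cabs_ip_le_A x1).
have := ler_wpM2l (_ : 0 <= 2 - mu) (cabs_ip_le_adj x1); rewrite subr_ge0.
move=> /(_ mu_le2); lra.
Qed.

End AdjointPair.

Local Close Scope complex_scope.
Unset Implicit Arguments.

Theorem mainTheorem4 (R : realType) (H : lmodType (complex R))
  (ip : H -> H -> complex R) (hH : is_hilbert_space ip)
  (A : {linear H -> H}) (hA : bounded_op ip A)
  (Astar : H -> H) (hAstar : is_adjoint ip A Astar)
  (mu : R) (hmu0 : 0 <= mu) (hmu2 : mu <= 2) :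
  numrad ip A ^+ 2 <=
    4^-1 * opnorm ip (fun x => ((mu%:C)%C : complex R) *: Astar (A x)
                               + (((2 - mu)%:C)%C : complex R) *: A (Astar x))
    + 8^-1 * opnorm ip (fun x => Astar (A x) + A (Astar x))
    + 4^-1 * numrad ip (fun x => A (A x)).
Proof.
have hip := hH.1.
have bAstar := adjoint_bounded hip hA hAstar.
have bAstarA := bounded_comp bAstar hA.
have bAAstar := bounded_comp hA bAstar.
have bT1 : bounded_op ip (fun x => (mu%:C)%C *: Astar (A x)
                                   + ((2 - mu)%:C)%C *: A (Astar x)).
  by apply: (bounded_add hip); apply: (bounded_scale hip).
have bT2 : bounded_op ip (fun x => Astar (A x) + A (Astar x)).
  exact: (bounded_add hip).
have bA2 : bounded_op ip (fun x => A (A x)) := bounded_comp hA hA.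
apply: numrad_sq_le => [|x x1].
  by rewrite !addr_ge0 ?mulr_ge0 ?invr_ge0 ?opnorm_ge0 ?numrad_ge0.
apply: le_trans (pointwise_bound hip hAstar hmu0 hmu2 x1) _.
have bound1 : mu * hnorm ip (A x) ^+ 2 + (2 - mu) * hnorm ip (Astar x) ^+ 2
    <= opnorm ip (fun x => (mu%:C)%C *: Astar (A x) + ((2 - mu)%:C)%C *: A (Astar x)).
  by rewrite -(Re_ip_weighted_sum hip hAstar); exact (Re_ip_le_opnorm hip bT1 x1).
have bound2 : hnorm ip (A x) ^+ 2 + hnorm ip (Astar x) ^+ 2
    <= opnorm ip (fun x => Astar (A x) + A (Astar x)).
  by rewrite -(Re_ip_sum hip hAstar); exact (Re_ip_le_opnorm hip bT2 x1).
have bound3 := numrad_ub hip bA2 x1.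
lra.
Qed.
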